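(* Let $k\ge 3$ and $n_1,\dots,n_k\ge 2$, and let $r\in[k]$. If $k$ is even, then $MR_{n_1,\dots,n_k}\in\mathcal{O}(K_{n_1,\dots,n_k})$. If $k$ is odd, then $MR_{n_1,\dots,n_k}\in\mathcal{O}(CS^r_{n_1,\dots,n_k})$.
   Context: All three graphs are on the same vertex set $U_1\sqcup\cdots\sqcup U_k$ with $|U_i|=n_i$. $K_{n_1,\dots,n_k}$: edges exactly between different parts. Clique-star $CS^r_{n_1,\dots,n_k}$: each $U_i$ is a clique, all vertices of $U_r$ are adjacent to all vertices of every $U_i$, $i\ne r$, and no edges between $U_i,U_l$ for distinct $i,l\ne r$. Multi-leaf repeater $MR_{n_1,\dots,n_k}$: for each $i$ a vertex $w_i\in U_i$ is adjacent to the other $n_i-1$ vertices of $U_i$ (which are leaves), and $w_1,\dots,w_k$ form a clique; no other edges. The local complement $c_v(G)$ complements the edges among the neighbours of $v$; $\mathcal{O}(G)$ is the set of graphs on $V(G)$ obtainable from $G$ by finite sequences of local complements. *)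

From mathcomp Require Import all_boot.
Set Implicit Arguments. Unset Strict Implicit. Unset Printing Implicit Defensive.

(* Vertex set U_1 ⊔ ... ⊔ U_k with |U_i| = n i : pairs (i, a) with a : 'I_(n i). *)
Definition vtx (k : nat) (n : 'I_k -> nat) : finType := {i : 'I_k & 'I_(n i)}.

Definition lc (T : finType) (G : rel T) (v : T) : rel T :=
  fun x y => if [&& x != y, G v x & G v y] then ~~ G x y else G x y.

Definition lc_orbit (T : finType) (G H : rel T) : Prop :=
  exists s : seq T, foldl (@lc T) G s =2 H.

Definition Kgraph (k : nat) (n : 'I_k -> nat) : rel (vtx n) :=
  fun x y => tag x != tag y.

Definition CSgraph (k : nat) (n : 'I_k -> nat) (r : 'I_k) : rel (vtx n) :=
  fun x y => if tag x == tag y then x != y else (tag x == r) || (tag y == r).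

Definition MRgraph (k : nat) (n : 'I_k -> nat) (w : forall i, 'I_(n i))
  : rel (vtx n) :=
  fun x y => if tag x == tag y
             then (x != y) && ((tagged x == w (tag x)) || (tagged y == w (tag y)))
             else (tagged x == w (tag x)) && (tagged y == w (tag y)).

From mathcomp Require Import all_boot.

Set Implicit Arguments.
Unset Strict Implicit.
Unset Printing Implicit Defensive.

(* Fix the hub part U_r and consider the graphs in which U_r is a clique or
   independent, every other part is either a clique or a star centred at w_i,
   U_r is joined to all of each clique part but only to the centre of each
   star part, and there are no other edges.  CS^r is such a graph, and so is
   c_{w_r}(K) (with U_r independent).  Complementing at the centre w_j of a
   clique part j <> r turns U_j into a star, cuts its leaves off U_r and
   toggles U_r.  After doing this once for every j <> r, U_r is a clique
   exactly when k is even for K and odd for CS^r; a last complement at w_r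
   then turns U_r into a star and the centres into a clique, which is MR. *)

Section LocalComplementOrbit.

Variable T : finType.
Implicit Types (G H K : rel T) (v : T) (s : seq T).

Lemma eq_lc G H v : G =2 H -> lc G v =2 lc H v.
Proof. by move=> eqGH x y; rewrite /lc !eqGH. Qed.

Lemma eq_foldl_lc s G H : G =2 H -> foldl (@lc T) G s =2 foldl (@lc T) H s.
Proof. by elim: s G H => [|v s IHs] G H //= eqGH; apply/IHs/eq_lc. Qed.

Lemma lc_orbit_eq2 G H : G =2 H -> lc_orbit G H.
Proof. by exists [::]. Qed.

Lemma lc_orbit_lc G v : lc_orbit G (lc G v).
Proof. by exists [:: v]. Qed.

Lemma lc_orbit_trans G H K : lc_orbit G H -> lc_orbit H K -> lc_orbit G K.
Proof.
case=> s eqGH [t eqHK]; exists (s ++ t) => x y.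
by rewrite foldl_cat (eq_foldl_lc t eqGH) eqHK.
Qed.

End LocalComplementOrbit.

Lemma addb_odd_predn m : 0 < m -> odd m (+) odd m.-1.
Proof. by case: m => //= m _; rewrite addNb addbb. Qed.

Section Repeater.

Variables (k : nat) (n : 'I_k -> nat) (r : 'I_k) (w : forall i, 'I_(n i)).

Definition centre (i : 'I_k) : vtx n := Tagged (fun i => 'I_(n i)) (w i).

Definition is_centre (x : vtx n) := tagged x == w (tag x).

Definition stage (b : bool) (s : seq 'I_k) : rel (vtx n) := fun x y =>
  if tag x == tag y then
    (x != y) && (if tag x == r then b else (tag x \in s) ==> is_centre x || is_centre y)
  else if tag x == r then is_centre y || (tag y \notin s)
  else (tag y == r) && (is_centre x || (tag x \notin s)).

Lemma vtx_eqE i l (a : 'I_(n i)) (b : 'I_(n l)) :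
  (Tagged (fun i => 'I_(n i)) a == Tagged (fun i => 'I_(n i)) b) =
  (i == l) && (val a == val b).
Proof.
have [eq_il | ne_il] := eqVneq i l.
  by subst l; rewrite eq_Tagged val_eqE.
by apply/negbTE/negP => /eq_tag /= eq_il; rewrite eq_il eqxx in ne_il.
Qed.

(* Both sides are boolean combinations of equalities between the part indices
   and positions involved, so splitting on all of them decides the identity. *)
Ltac case_vertices :=
  rewrite ?vtx_eqE;
  repeat match goal with
  | |- context [@eq_op _ ?x ?y] =>
      is_var x; is_var y; case: (x =P y) => [?|?]; [subst|]
  end;
  repeat match goal with
  | |- context [?i \in ?s] => is_var s; let mem_i := fresh in case mem_i: (i \in s)
  end;
  rewrite ?val_eqE;
  repeat match goal with
  | |- context [@eq_op _ ?x ?y] =>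
      first [is_var x | is_var y]; case: (x =P y) => [?|?]; [subst|]
  end;
  try match goal with b : bool |- _ => case: b end;
  rewrite ?eqxx /= ?orbT ?orbF ?andbT ?andbF //;
  try match goal with E : _ = true, E' : _ = false |- _ => by rewrite E' in E end.

Lemma CSgraph_stage : CSgraph r =2 stage true [::].
Proof. move=> [i a] [l b]; rewrite /CSgraph /stage /is_centre /=; case_vertices. Qed.

Lemma Kgraph_lc_centre : lc (@Kgraph k n) (centre r) =2 stage false [::].
Proof. move=> [i a] [l b]; rewrite /lc /Kgraph /stage /centre /is_centre /=; case_vertices. Qed.

Lemma stage_lc_centre b s j : j != r -> j \notin s ->
  lc (stage b s) (centre j) =2 stage (~~ b) (rcons s j).
Proof.
move=> /eqP ne_jr /negbTE s'j [i a] [l c].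
rewrite /lc /stage /centre /is_centre /= !mem_rcons !in_cons; case_vertices.
Qed.

Lemma stage_lc_hub s : (forall i, (i \in s) = (i != r)) ->
  lc (stage true s) (centre r) =2 MRgraph w.
Proof.
move=> mem_s [i a] [l b].
rewrite /lc /stage /centre /is_centre /MRgraph /= !mem_s; case_vertices.
Qed.

Lemma stage_foldl_centres b s : uniq s -> r \notin s ->
  foldl (@lc _) (stage b [::]) (map centre s) =2 stage (b (+) odd (size s)) s.
Proof.
elim/last_ind: s => [|s j IHs]; first by rewrite addbF.
rewrite rcons_uniq mem_rcons in_cons negb_or => /andP[s'j uniq_s] /andP[ne_rj s'r].
rewrite map_rcons foldl_rcons size_rcons /= addbN => x y.
by rewrite (eq_lc _ (IHs uniq_s s'r)) stage_lc_centre // eq_sym.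
Qed.

Lemma stage_lc_orbit_MR b : b = odd k -> lc_orbit (stage b [::]) (MRgraph w).
Proof.
move->.
set s := enum (predC1 r).
have mem_s i : (i \in s) = (i != r) by rewrite mem_enum.
have parity : odd k (+) odd (size s).
  by rewrite -cardE cardC1 card_ord addb_odd_predn // (leq_ltn_trans _ (ltn_ord r)).
exists (rcons (map centre s) (centre r)) => x y.
rewrite foldl_rcons (eq_lc _ (stage_foldl_centres _ (enum_uniq _) _)) ?mem_s ?eqxx //.
by rewrite parity stage_lc_hub.
Qed.

End Repeater.

Theorem theorem9 (k : nat) (n : 'I_k -> nat) (r : 'I_k) (w : forall i, 'I_(n i)) :
  3 <= k -> (forall i, 2 <= n i) ->
  (~~ odd k -> lc_orbit (@Kgraph k n) (@MRgraph k n w)) /\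
  (odd k -> lc_orbit (@CSgraph k n r) (@MRgraph k n w)).
Proof.
move=> _ _; split=> [k_even | k_odd].
  apply: lc_orbit_trans (lc_orbit_lc _ (centre w r)) _.
  apply: lc_orbit_trans (lc_orbit_eq2 (Kgraph_lc_centre r w)) _.
  by apply: stage_lc_orbit_MR; rewrite (negbTE k_even).
apply: lc_orbit_trans (lc_orbit_eq2 (CSgraph_stage r w)) _.
by apply: stage_lc_orbit_MR; rewrite k_odd.
Qed.
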